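(* Let $\mathbf d=(d_1,\dots,d_m)\in(\mathbb Z_{\ge0})^m$ and let $z=z(\mathbf s)$ be the formal power series in $\mathbf s=(s_1,\dots,s_m)$ determined by $1-z+\sum_{i=1}^m s_iz^{d_i+1}=0$, $z(0)=1$. Define the formal power series $$F(\mathbf s)=\sum_{\mathbf k\in(\mathbb Z_{\ge0})^m}\frac{\binom{2+(\mathbf d+\mathbf 1)\cdot\mathbf k}{\mathbf k}}{(1+(\mathbf d+\mathbf 1)\cdot\mathbf k)(2+(\mathbf d+\mathbf 1)\cdot\mathbf k)}\mathbf s^{\mathbf k},$$ $$G(\mathbf s)=\sum_{\mathbf k\in(\mathbb Z_{\ge0})^m}\frac{6+\sum_{i=1}^m\frac{d_i(d_i+1)}{d_i+2}k_i}{(2+(\mathbf d+\mathbf 1)\cdot\mathbf k)(3+(\mathbf d+\mathbf 1)\cdot\mathbf k)(4+(\mathbf d+\mathbf 1)\cdot\mathbf k)}\binom{4+(\mathbf d+\mathbf 1)\cdot\mathbf k}{\mathbf k}\mathbf s^{\mathbf k}.$$ Then $G=F^2$ as formal power series; more precisely $G(\mathbf s)=F(\mathbf s)^2-\frac14z^2\big(1-z+\sum_{i=1}^ms_iz^{d_i+1}\big)^2$.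
   Context: Notation: $\mathbf 1=(1,\dots,1)$, $\mathbf a\cdot\mathbf b=\sum a_ib_i$, $\mathbf s^{\mathbf k}=\prod s_i^{k_i}$, $\mathbf k!=\prod k_i!$, and the multinomial coefficient $\binom{n}{\mathbf k}=\frac{n!}{k_1!\cdots k_m!\,(n-\mathbf k\cdot\mathbf 1)!}$. *)

(* Multivariate formal power series in m variables over rat
   are represented by their coefficient functions (exponent vectors 'I_m -> nat). *)
From HB Require Import structures.
From mathcomp Require Import all_boot all_order all_algebra.
Set Implicit Arguments. Unset Strict Implicit. Unset Printing Implicit Defensive.
Import Order.TTheory GRing.Theory Num.Theory.
Local Open Scope ring_scope.

Definition mps (m : nat) := ('I_m -> nat) -> rat.

Definition dotv (m : nat) (a k : 'I_m -> nat) : nat := (\sum_(i < m) a i * k i)%N.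

Definition multinom (m : nat) (n : nat) (k : 'I_m -> nat) : rat :=
  (n`!)%:R / ((\prod_(i < m) (k i)`!) * (n - \sum_(i < m) k i)`!)%N%:R.

Definition mps_mul (m : nat) (f g : mps m) : mps m := fun k =>
  \sum_(j : {ffun 'I_m -> 'I_(\max_(i < m) k i).+1} | [forall i, (j i <= k i)%N])
     f (fun i => nat_of_ord (j i)) * g (fun i => (k i - j i)%N).

Definition Nk (m : nat) (d k : 'I_m -> nat) : nat := dotv (fun i => (d i).+1) k.

Definition Fser (m : nat) (d : 'I_m -> nat) : mps m := fun k =>
  multinom (2 + Nk d k) k / ((1 + Nk d k)%:R * (2 + Nk d k)%:R).

Definition Gser (m : nat) (d : 'I_m -> nat) : mps m := fun k =>
  (6 + \sum_(i < m) ((d i * (d i).+1)%:R / (d i + 2)%:R) * (k i)%:R)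
  / ((2 + Nk d k)%:R * (3 + Nk d k)%:R * (4 + Nk d k)%:R)
  * multinom (4 + Nk d k) k.

From HB Require Import structures.
From mathcomp Require Import all_boot all_order all_algebra.
From mathcomp Require Import ring lra zify.
From Stdlib Require Import FunctionalExtensionality.
Set Implicit Arguments. Unset Strict Implicit. Unset Printing Implicit Defensive.
Import Order.TTheory GRing.Theory Num.Theory.
Local Open Scope ring_scope.

(* Write N(k) = (d+1).k and D(k) = d.k, so that N(k) = |k| + D(k).  Every
   series involved has coefficients of the shape n! / (k! r!) (mnom n r k):
   - z^a has coefficients a (a+N-1)! / (k! (a+D)!)                  (zpow a);
   - z^b L, with L = z / (1 - sum_i d_i s_i z^(d_i+1)), has coefficients
     (b+N)! / (k! (b+D)!)                                           (lag b);
   - F_k = N! / (k! (D+2)!) and G_k = (N+6-2S) (N+1)! / (k! (D+4)!), where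
     S(k) = sum_i (d_i+1)/(d_i+2) k_i.
   Both families satisfy X_(a+1) - X_a = sum_i s_i X_(a+d_i+1) (zrec), and
   for every such family z^a X_b = X_(a+b) (mps_mul_zpow, by induction on
   N(k) and then on a).  Now F = z^2/2 - sum_i (d_i+1)/(d_i+2) s_i z^(d_i+2),
   and splitting the weight (D+3)(D+4) of each term of F*F along
   D(k) = D(j) + D(k-j) gives (D+3)(D+4) (F*F) = 2 F*L + 2 z*z; both products
   are then computed by mps_mul_zpow, and the result is the closed form of
   (D+3)(D+4) G_k. *)

Section Convolution.
Variable m : nat.
Implicit Types (f g : mps m) (k : 'I_m -> nat).

(* The Cauchy product computed over the box of exponent vectors with entries
   at most B; mps_mul uses the box of side max_i k_i. *)
Definition conv_box B f g k : rat :=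
  \sum_(j : {ffun 'I_m -> 'I_B.+1} | [forall i, (j i <= k i)%N])
     f (fun i => nat_of_ord (j i)) * g (fun i => (k i - j i)%N).

Lemma conv_box_widen B f g k : (forall i, k i <= B)%N ->
  conv_box B.+1 f g k = conv_box B f g k.
Proof.
move=> kB; rewrite /conv_box.
pose wid (j : {ffun 'I_m -> 'I_B.+1}) : {ffun 'I_m -> 'I_B.+2} :=
  [ffun i => widen_ord (leqnSn _) (j i)].
pose cut (j : {ffun 'I_m -> 'I_B.+2}) : {ffun 'I_m -> 'I_B.+1} :=
  [ffun i => inord (j i)].
rewrite (reindex_onto wid cut) => [|j /forallP jk]; last first.
  apply/ffunP => i; apply: val_inj; rewrite !ffunE /= inordK // ltnS.
  exact: leq_trans (jk i) (kB i).
apply: eq_big => [j|j _].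
  have -> : cut (wid j) == j.
    by apply/eqP/ffunP => i; apply: val_inj; rewrite !ffunE /= inordK.
  by rewrite andbT; apply: eq_forallb => i; rewrite ffunE.
by congr (f _ * g _); apply: functional_extensionality => i; rewrite ffunE.
Qed.

Lemma conv_boxE B f g k : (forall i, k i <= B)%N -> conv_box B f g k = mps_mul f g k.
Proof.
have k_max i : (k i <= \max_(x < m) k x)%N by exact: leq_bigmax.
elim: B => [|B IHB] kB.
  suff max0 : (\max_(x < m) k x = 0)%N by rewrite /mps_mul max0.
  by apply/eqP; rewrite -leqn0; apply/bigmax_leqP => i _; exact: kB.
have [maxB|Bmax] := leqP (\max_(x < m) k x) B.
  rewrite conv_box_widen => [|i]; last exact: leq_trans (k_max i) maxB.
  by apply: IHB => i; exact: leq_trans (k_max i) maxB.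
suff -> : B.+1 = \max_(x < m) k x by [].
by apply/eqP; rewrite eqn_leq Bmax; apply/bigmax_leqP => i _; exact: kB.
Qed.

Lemma mps_mul_ext f f' g g' k : (forall j, f j = f' j) -> (forall j, g j = g' j) ->
  mps_mul f g k = mps_mul f' g' k.
Proof. by move=> ff' gg'; apply: eq_bigr => j _; rewrite ff' gg'. Qed.

Lemma mps_mulBl f f' g k :
  mps_mul (fun j => f j - f' j) g k = mps_mul f g k - mps_mul f' g k.
Proof. by rewrite /mps_mul -sumrB; apply: eq_bigr => j _; rewrite mulrBl. Qed.

Lemma mps_mulZl c f g k : mps_mul (fun j => c * f j) g k = c * mps_mul f g k.
Proof. by rewrite /mps_mul mulr_sumr; apply: eq_bigr => j _; rewrite mulrA. Qed.

Lemma mps_mul_suml (F : 'I_m -> mps m) g k :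
  mps_mul (fun j => \sum_(i < m) F i j) g k = \sum_(i < m) mps_mul (F i) g k.
Proof. by rewrite /mps_mul exchange_big; apply: eq_bigr => j _; rewrite mulr_suml. Qed.

(* Commutativity, via the involution j |-> k - j of the box. *)
Lemma mps_mulC f g k : mps_mul f g k = mps_mul g f k.
Proof.
rewrite /mps_mul; set B := \max_(x < m) k x.
have kB x : (k x <= B)%N by exact: leq_bigmax.
pose co (j : {ffun 'I_m -> 'I_B.+1}) : {ffun 'I_m -> 'I_B.+1} := [ffun x => inord (k x - j x)].
have coE j x : (co j x : nat) = (k x - j x)%N.
  by rewrite /co ffunE inordK // ltnS; exact: leq_trans (leq_subr _ _) (kB x).
have coK (j : {ffun 'I_m -> 'I_B.+1}) : [forall x, j x <= k x]%N -> co (co j) = j.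
  move=> /forallP jk; apply/ffunP => x; apply: val_inj; rewrite /= !coE.
  exact: subKn (jk x).
rewrite (reindex_onto co co) //.
apply: eq_big => [j|j /andP[_ /eqP coKj]].
  apply/andP/forallP => [[_ /eqP <-] x|jk]; first by rewrite coE leq_subr.
  by split; [apply/forallP => x; rewrite coE leq_subr|rewrite coK //; apply/forallP].
rewrite mulrC; congr (g _ * f _); apply: functional_extensionality => x.
  by rewrite -coE coKj.
by rewrite coE.
Qed.

(* decr i k lowers the i-th exponent by one; shift i f is s_i * f. *)
Definition decr (i : 'I_m) k : 'I_m -> nat := fun x => if x == i then (k x).-1 else k x.
Definition shift (i : 'I_m) f : mps m := fun k => if (0 < k i)%N then f (decr i k) else 0.

(* In a box containing k, multiplying f by s_i lowers the i-th exponent of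
   the convolution by one: the terms with j_i = 0 vanish and the others are
   reindexed along j |-> j + e_i. *)
Lemma conv_box_shiftl B i f g k : (forall x, k x <= B)%N -> (0 < k i)%N ->
  conv_box B (shift i f) g k = conv_box B f g (decr i k).
Proof.
move=> kB ki_gt0; rewrite /conv_box.
rewrite (bigID (fun j : {ffun 'I_m -> 'I_B.+1} => (0 < j i)%N)) /=.
rewrite [X in _ + X]big1 ?addr0 => [|j /andP[_]]; last first.
  by rewrite -eqn0Ngt /shift => /eqP ->; rewrite mul0r.
pose up (j : {ffun 'I_m -> 'I_B.+1}) : {ffun 'I_m -> 'I_B.+1} :=
  [ffun x => inord (j x + (x == i))].
pose down (j : {ffun 'I_m -> 'I_B.+1}) : {ffun 'I_m -> 'I_B.+1} :=
  [ffun x => inord (j x - (x == i))].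
have downE (j : {ffun 'I_m -> 'I_B.+1}) x : (down j x : nat) = (j x - (x == i))%N.
  by rewrite /down ffunE inordK // ltnS (leq_trans (leq_subr _ _)) // -ltnS.
have upE (j : {ffun 'I_m -> 'I_B.+1}) x : (forall y, j y <= decr i k y)%N ->
    (up j x : nat) = (j x + (x == i))%N.
  move=> jk; rewrite /up ffunE inordK // ltnS; move: (jk x) (kB x).
  by rewrite /decr; case: eqP => [->|_] /=; lia.
rewrite (reindex_onto up down) => [|j /andP[_ ji_gt0]]; last first.
  apply/ffunP => x; apply: val_inj; rewrite /up ffunE downE /= inordK.
    by case: eqP => [->|_] /=; lia.
  by move: (ltn_ord (j x)); case: eqP => [->|_] /=; lia.
symmetry; apply: eq_big => [j|j /forallP jk].
  apply/forallP/idP => [jk|/andP[/andP[/forallP upk upi] _] x]; last first.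
    move: upi (upk x); rewrite /up !ffunE /decr.
    case: (eqVneq x i) => [->|xi]; last by rewrite addn0 inord_val.
    rewrite eqxx /inord /insubd; case: insubP => [y _ -> _|_] /=; lia.
  have upj := upE j _ jk.
  rewrite upj eqxx addn1 andbT; apply/andP; split.
    apply/forallP => x; rewrite upj; move: (jk x).
    by rewrite /decr; case: eqP => [->|_] /=; lia.
  by apply/eqP/ffunP => x; apply: val_inj; rewrite /= downE upj addnK.
have upj := upE j _ jk.
rewrite /shift upj eqxx addn1 /=.
symmetry; congr (f _ * g _); apply: functional_extensionality => x; rewrite /decr upj.
  by case: eqP => [->|_] /=; lia.
by move: (jk x); rewrite /decr; case: eqP => [->|_] /=; lia.
Qed.

Lemma mps_mul_shiftl i f g k : mps_mul (shift i f) g k = shift i (mps_mul f g) k.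
Proof.
rewrite {2}/shift; have [ki0|ki_gt0] := posnP (k i).
  rewrite /mps_mul big1 // => j /forallP jk.
  by move: (jk i); rewrite ki0 leqn0 /shift => /eqP ->; rewrite mul0r.
have kB x : (k x <= \max_(y < m) k y)%N by exact: leq_bigmax.
have dkB x : (decr i k x <= \max_(y < m) k y)%N.
  by rewrite /decr; case: eqP => _; [exact: leq_trans (leq_pred _) (kB x)|exact: kB].
by rewrite -(conv_boxE f g dkB) -(conv_boxE _ g kB) conv_box_shiftl.
Qed.

Lemma mps_mul1l e g k : (forall j, e j = [forall i, j i == 0%N]%:R) -> mps_mul e g k = g k.
Proof.
move=> eE; rewrite /mps_mul; set B := \max_(x < m) k x.
pose zero : {ffun 'I_m -> 'I_B.+1} := [ffun _ => ord0].
rewrite (bigD1 zero) /=; last by apply/forallP => x; rewrite ffunE.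
rewrite big1 => [|j /andP[_ jz]]; last first.
  rewrite eE; case: forallP => [j0|]; last by rewrite mul0r.
  by move/eqP: jz; case; apply/ffunP => x; apply: val_inj; rewrite ffunE; apply/eqP; exact: j0.
rewrite eE addr0; have -> : [forall x, zero x == 0%N :> nat] by apply/forallP => x; rewrite ffunE.
by rewrite mul1r; congr g; apply: functional_extensionality => x; rewrite ffunE subn0.
Qed.

End Convolution.

Section Exponents.
Variable m : nat.
Implicit Types (a j k : 'I_m -> nat).

Definition factv k : nat := \prod_(i < m) (k i)`!.

Lemma factv_gt0 k : (0 < factv k)%N.
Proof. by apply: prodn_gt0 => i; exact: fact_gt0. Qed.

Lemma factv_decr k i : (0 < k i)%N -> factv k = (k i * factv (decr i k))%N.
Proof.
move=> ki_gt0; rewrite /factv (bigD1 i) //= [in RHS](bigD1 i) //= /decr eqxx.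
rewrite [in RHS](eq_bigr (fun x => (k x)`!)) => [|x /negbTE -> //].
by rewrite -{1}(prednK ki_gt0) factS prednK // mulnA.
Qed.

Lemma dotv_decr a k i : (0 < k i)%N -> (dotv a (decr i k) + a i = dotv a k)%N.
Proof.
move=> ki_gt0; rewrite /dotv (bigD1 i) //= [in RHS](bigD1 i) //= /decr eqxx.
rewrite (eq_bigr (fun x => a x * k x)%N) => [|x /negbTE -> //].
by rewrite -[in RHS](prednK ki_gt0) mulnS; lia.
Qed.

Lemma dotv_split a k j : (forall x, j x <= k x)%N ->
  dotv a k = (dotv a j + dotv a (fun x => k x - j x))%N.
Proof.
by move=> jk; rewrite /dotv -big_split; apply: eq_bigr => x _ /=; rewrite -mulnDr subnKC.
Qed.

End Exponents.

Section Lagrange.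
Variables (m : nat) (d : 'I_m -> nat).
Implicit Types (k : 'I_m -> nat).

Definition mnom n r k : rat := n`!%:R / ((factv k)%:R * r`!%:R).

Lemma multinom_mnom n k : multinom n k = mnom n (n - \sum_i k i) k.
Proof. by rewrite /multinom natrM. Qed.

(* Side conditions of field: shifted casts of naturals are nonzero. *)
Lemma natr_addl_neq0 (c : rat) n : 0 < c -> c + n%:R != 0.
Proof. by move=> c_gt0; apply/eqP => eq0; have := ler0n rat n; lra. Qed.

Lemma mnomSn n r k : mnom n.+1 r k = n.+1%:R * mnom n r k.
Proof. by rewrite /mnom factS natrM mulrA. Qed.

Lemma mnomnS n r k : mnom n r k = r.+1%:R * mnom n r.+1 k.
Proof.
rewrite /mnom factS natrM.
have fk : (factv k)%:R != 0 :> rat by rewrite pnatr_eq0 -lt0n factv_gt0.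
have fr : r`!%:R != 0 :> rat by rewrite pnatr_eq0 -lt0n fact_gt0.
by field; rewrite natr_addl_neq0 ?ltr01 ?fk ?fr.
Qed.

Lemma mnom_decr n r k i : (0 < k i)%N -> mnom n r (decr i k) = (k i)%:R * mnom n r k.
Proof.
move=> ki_gt0; rewrite /mnom (factv_decr ki_gt0) natrM.
have fk : (factv (decr i k))%:R != 0 :> rat by rewrite pnatr_eq0 -lt0n factv_gt0.
have fr : r`!%:R != 0 :> rat by rewrite pnatr_eq0 -lt0n fact_gt0.
have ki : (k i)%:R != 0 :> rat by rewrite pnatr_eq0 -lt0n.
by field; apply/and3P.
Qed.

Definition Dk k : nat := dotv d k.

Lemma NkE k : Nk d k = (\sum_i k i + Dk k)%N.
Proof. by rewrite /Nk /Dk /dotv -big_split; apply: eq_bigr => i _; rewrite mulSn. Qed.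

Lemma Nk_eq0 k : (Nk d k == 0%N) = [forall i, k i == 0%N].
Proof.
rewrite /Nk /dotv sum_nat_eq0; apply: eq_forallb => i.
by rewrite muln_eq0.
Qed.

(* Coefficients of z^a: by Lagrange inversion [s^k] z^a = a/(a+N) (a+N choose k). *)
Definition zpow a k : rat :=
  if a is a'.+1 then a%:R * mnom (a' + Nk d k)%N (a + Dk k)%N k
  else [forall i, k i == 0%N]%:R.

(* Coefficients of z^b * L with L = z / (1 - sum_i d_i s_i z^(d_i+1)), by the
   second form of Lagrange inversion: [s^k] z^b L = (b+N choose k). *)
Definition lag b k : rat := mnom (b + Nk d k)%N (b + Dk k)%N k.

(* X satisfies the defining relation of z multiplied by X_a:
   X_(a+1) - X_a = sum_i s_i X_(a+d_i+1), as for X_a = z^a * X_0. *)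
Definition zrec (X : nat -> mps m) :=
  forall a k, X a.+1 k - X a k = \sum_(i < m) shift i (X (a + (d i).+1)%N) k.

Lemma Nk_decr k i : (0 < k i)%N -> (Nk d (decr i k) + (d i).+1 = Nk d k)%N.
Proof. exact: dotv_decr. Qed.

Lemma Dk_decr k i : (0 < k i)%N -> (Dk (decr i k) + d i = Dk k)%N.
Proof. exact: dotv_decr. Qed.

Lemma zpow_shift a i k : shift i (zpow (a + (d i).+1)%N) k =
  ((a + (d i).+1) * k i)%:R * mnom (a + Nk d k).-1%N (a + Dk k).+1%N k.
Proof.
rewrite /shift; have [->|ki_gt0] := posnP (k i); first by rewrite muln0 mul0r.
have N_eq : (a + d i + Nk d (decr i k) = (a + Nk d k).-1)%N.
  by have := Nk_decr ki_gt0; lia.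
have D_eq : ((a + d i).+1 + Dk (decr i k) = (a + Dk k).+1)%N.
  by have := Dk_decr ki_gt0; lia.
by rewrite addnS /zpow N_eq D_eq mnom_decr // -addnS natrM mulrA.
Qed.

Lemma zpow_rec : zrec zpow.
Proof.
move=> a k; rewrite (eq_bigr _ (fun i _ => zpow_shift a i k)) -mulr_suml -natr_sum.
have -> : (\sum_(i < m) (a + (d i).+1) * k i = a * \sum_i k i + Nk d k)%N.
  by rewrite /Nk /dotv big_distrr -big_split; apply: eq_bigr => i _; rewrite mulnDl.
case: a => [|a].
  rewrite /zpow !add0n mul1r -Nk_eq0; have [N0|[n Nn]] : Nk d k = 0%N \/ exists n, Nk d k = n.+1.
  - by case: (Nk d k) => [|n]; [left|right; exists n].
  - have k0 i : k i = 0%N by apply/eqP; move: i; apply/forallP; rewrite -Nk_eq0 N0.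
    have D0 : Dk k = 0%N by move: N0; rewrite NkE; lia.
    have f0 : factv k = 1%N by rewrite /factv big1 // => i _; rewrite k0.
    by rewrite N0 D0 /mnom f0 eqxx mul1r mul0r divr1 subrr.
  - by rewrite Nn /= subr0 mnomSn.
rewrite /zpow NkE; set S := (\sum_i k i)%N; set D := Dk k.
rewrite !addSn /= mnomSn (mnomnS _ (a + D).+1%N).
set X := mnom _ _ k.
by rewrite natrD !natrM -!natr1 !natrD; ring.
Qed.

Lemma lag_shift b i k : shift i (lag (b + (d i).+1)%N) k =
  (k i)%:R * mnom (b + Nk d k)%N (b + Dk k).+1%N k.
Proof.
rewrite /shift; have [->|ki_gt0] := posnP (k i); first by rewrite mul0r.
have N_eq : (b + (d i).+1 + Nk d (decr i k) = b + Nk d k)%N.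
  by have := Nk_decr ki_gt0; lia.
have D_eq : (b + (d i).+1 + Dk (decr i k) = (b + Dk k).+1)%N.
  by have := Dk_decr ki_gt0; lia.
by rewrite /lag N_eq D_eq mnom_decr.
Qed.

Lemma lag_rec : zrec lag.
Proof.
move=> b k; rewrite (eq_bigr _ (fun i _ => lag_shift b i k)) -mulr_suml -natr_sum.
rewrite /lag !addSn mnomSn (mnomnS _ (b + Dk k)%N) -mulrBl; congr (_ * _).
by rewrite NkE -!natr1 !natrD; ring.
Qed.

Theorem mps_mul_zpow X : zrec X -> forall a b k, mps_mul (zpow a) (X b) k = X (a + b)%N k.
Proof.
move=> Xrec a b k; move: (ltnSn (Nk d k)); move: {2}(Nk d k).+1 => n.
elim: n a b k => [//|n IHn] a b k kn.
elim: a => [|a IHa]; first by rewrite add0n; apply: mps_mul1l.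
suff step : mps_mul (zpow a.+1) (X b) k - mps_mul (zpow a) (X b) k =
            X (a + b).+1 k - X (a + b)%N k.
  by rewrite addSn -(subrK (X (a + b)%N k) (X (a + b).+1 k)) -step IHa subrK.
rewrite -mps_mulBl (mps_mul_ext (g := X b) (g' := X b) k (zpow_rec a) (fun _ => erefl)).
rewrite mps_mul_suml Xrec; apply: eq_bigr => i _.
rewrite mps_mul_shiftl /shift; case: posnP => // ki_gt0.
have decr_lt : (Nk d (decr i k) < n)%N by have := Nk_decr ki_gt0; lia.
by rewrite IHn // addnAC.
Qed.

End Lagrange.

Section Square.
Variables (m : nat) (d : 'I_m -> nat).
Implicit Types (k : 'I_m -> nat).

Local Notation F := (Fser d).

Lemma Fser_mnom k : F k = mnom (Nk d k) (Dk d k).+2 k.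
Proof.
rewrite /Fser multinom_mnom (_ : 2 + Nk d k - \sum_i k i = (Dk d k).+2)%N; last first.
  by rewrite NkE; lia.
rewrite add2n add1n !mnomSn.
by field; rewrite !natr_addl_neq0 ?ltr01 ?ltr0Sn.
Qed.

Lemma zpow1_F k : zpow d 1 k = (Dk d k).+2%:R * F k.
Proof. by rewrite Fser_mnom /zpow mul1r add0n -mnomnS. Qed.

Lemma lag0_F k : lag d 0 k = ((Dk d k).+1 * (Dk d k).+2)%:R * F k.
Proof. by rewrite Fser_mnom /lag !add0n natrM -mulrA -!mnomnS. Qed.

Definition cf (i : 'I_m) : rat := (d i).+1%:R / (d i).+2%:R.
Definition Sk k : rat := \sum_(i < m) cf i * (k i)%:R.

Lemma F_decomp k :
  F k = 2^-1 * zpow d 2 k - \sum_(i < m) cf i * shift i (zpow d (1 + (d i).+1)) k.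
Proof.
under eq_bigr => i _ do rewrite zpow_shift.
rewrite /zpow Fser_mnom add1n /= mnomSn.
set X := mnom _ _ k.
have -> : \sum_(i < m) cf i * (((d i).+2 * k i)%:R * X) = (Nk d k)%:R * X.
  rewrite /Nk /dotv natr_sum mulr_suml; apply: eq_bigr => i _.
  by rewrite /cf !natrM; field; rewrite natr_addl_neq0 ?ltr0Sn.
by rewrite -natr1; field.
Qed.

(* Splitting the weight (D+3)(D+4) of F*F along D(k) = D(j) + D(k-j):
   (a+b+3)(a+b+4) = (a+1)(a+2) + (b+1)(b+2) + 2(a+2)(b+2). *)
Lemma FF_weighted k : mps_mul F F k * ((Dk d k).+3 * (Dk d k).+4)%:R =
  2 * mps_mul F (lag d 0) k + 2 * mps_mul (zpow d 1) (zpow d 1) k.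
Proof.
have -> : 2 * mps_mul F (lag d 0) k = mps_mul (lag d 0) F k + mps_mul F (lag d 0) k.
  by rewrite (mps_mulC (lag d 0)); ring.
rewrite /mps_mul mulr_suml mulr_sumr -!big_split.
apply: eq_bigr => j /forallP jk.
have -> : Dk d k = (Dk d (fun x => j x) + Dk d (fun x => k x - j x))%N := dotv_split d jk.
rewrite !lag0_F !zpow1_F /= !natrM -!natr1 !natrD; ring.
Qed.

(* Multiplying the decomposition of F by L = z^0 L: each z^a becomes z^a L. *)
Lemma F_lag k : mps_mul F (lag d 0) k =
  2^-1 * lag d 2 k - \sum_(i < m) cf i * shift i (lag d (1 + (d i).+1)) k.
Proof.
have zpow_lag a j : mps_mul (zpow d a) (lag d 0) j = lag d a j.
  by rewrite (mps_mul_zpow (lag_rec d)) addn0.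
rewrite (mps_mul_ext (g := lag d 0) (g' := lag d 0) k F_decomp (fun _ => erefl)).
rewrite mps_mulBl mps_mulZl zpow_lag mps_mul_suml; congr (_ - _).
apply: eq_bigr => i _.
by rewrite mps_mulZl mps_mul_shiftl /shift; case: ifP => // _; rewrite zpow_lag.
Qed.

Lemma Gweights k : \sum_(i < m) (d i * (d i).+1)%:R / (d i + 2)%:R * (k i)%:R =
  (Nk d k)%:R - 2 * Sk k.
Proof.
rewrite /Sk /Nk /dotv natr_sum mulr_sumr -sumrB; apply: eq_bigr => i _.
by rewrite /cf !natrM addn2; field; rewrite natr_addl_neq0 ?ltr0Sn.
Qed.

(* Both sides of the theorem, weighted by (D+3)(D+4), equal
   (N + 6 - 2 S) (N+1)! / (k! (D+2)!): first F*F ... *)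
Lemma FF_closed k : mps_mul F F k * ((Dk d k).+3 * (Dk d k).+4)%:R =
  ((Nk d k)%:R + 6 - 2 * Sk k) * mnom (Nk d k).+1 (Dk d k).+2 k.
Proof.
rewrite FF_weighted F_lag (mps_mul_zpow (zpow_rec d)).
under eq_bigr => i _ do rewrite lag_shift mulrA.
rewrite /lag /zpow /Sk -mulr_suml /= !add0n !add1n !add2n mnomSn -natr1.
by field.
Qed.

Lemma G_closed k : Gser d k * ((Dk d k).+3 * (Dk d k).+4)%:R =
  ((Nk d k)%:R + 6 - 2 * Sk k) * mnom (Nk d k).+1 (Dk d k).+2 k.
Proof.
rewrite /Gser Gweights multinom_mnom.
rewrite (_ : 4 + Nk d k - \sum_i k i = (Dk d k).+4)%N; last by rewrite NkE; lia.
rewrite (_ : 4 + Nk d k = (Nk d k).+4)%N // 3!mnomSn (mnomnS _ (Dk d k).+2) (mnomnS _ (Dk d k).+3).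
by rewrite natrM; field; rewrite !natr_addl_neq0 ?ltr0Sn.
Qed.

End Square.

Theorem theoremA2 (m : nat) (d : 'I_m -> nat) (k : 'I_m -> nat) :
  Gser d k = mps_mul (Fser d) (Fser d) k.
Proof.
have weight_neq0 : ((Dk d k).+3 * (Dk d k).+4)%:R != 0 :> rat by rewrite pnatr_eq0.
by apply: (mulIf weight_neq0); rewrite G_closed FF_closed.
Qed.
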